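(* Let $n\geq 3$, $d\geq 2$, $\ell\in\mathbb{R}_{>0}^n$, let $f_d:\mathbb{R}^d\to\mathbb{R}^{d+1}$ be a linear Euclidean isometry with induced map $F_d:V_d(\ell)\to V_{d+1}(\ell)$, and let $P\in V_d(\ell)$. Then the preimage under $F_d$ of the $SO(d+1)$-orbit of $F_d(P)$ is the $O(d)$-orbit of $P$: \[F_d^{-1}\big(SO(d+1)(F_d(P))\big)=O(d)(P).\]
   Context: $V_d(\ell)=\{(\mathbf{v}_1,\ldots,\mathbf{v}_{n-1})\in(\mathbb{R}^d)^{n-1} : \|\mathbf{v}_i-\mathbf{v}_{i-1}\|=l_i,\ i=1,\ldots,n\}$ with $\mathbf{v}_0=\mathbf{v}_n=\mathbf{0}$. A group $G$ of linear maps acts on polygons diagonally, $T(\mathbf{v}_1,\ldots,\mathbf{v}_{n-1})=(T(\mathbf{v}_1),\ldots,T(\mathbf{v}_{n-1}))$, and $G(P)=\{T(P):T\in G\}$ is the orbit. $F_d(\mathbf{v}_1,\ldots,\mathbf{v}_{n-1})=(f_d(\mathbf{v}_1),\ldots,f_d(\mathbf{v}_{n-1}))$. *)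

From mathcomp Require Import all_boot all_order all_algebra.
From mathcomp Require Import reals.
Set Implicit Arguments. Unset Strict Implicit. Unset Printing Implicit Defensive.
Import Order.TTheory GRing.Theory Num.Theory.
Local Open Scope ring_scope.

Section Defs.
Variable R : realType.

Definition enorm d (v : 'cV[R]_d) : R := Num.sqrt (\sum_(j < d) v j 0 ^+ 2).

(* A polygon (v_1, ..., v_{n-1}) in (R^d)^{n-1} *)
Definition polygon n d := 'I_n.-1 -> 'cV[R]_d.

(* vertex P i = v_i, with v_0 = v_n = 0 *)
Definition vertex n d (P : polygon n d) (i : nat) : 'cV[R]_d :=
  match insub i.-1 with
  | Some k => if i == 0%N then 0 else P k
  | None => 0
  end.

(* V_d(l): ||v_i - v_{i-1}|| = l_i for i = 1..n; l_i is stored as l (i-1) *)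
Definition polyspace n d (l : 'I_n -> R) : polygon n d -> Prop :=
  fun P => forall i : 'I_n, enorm (vertex P i.+1 - vertex P i) = l i.

Definition orthogonal_mx d (T : 'M[R]_d) : Prop := T *m T^T = 1%:M.
Definition special_orthogonal_mx d (T : 'M[R]_d) : Prop :=
  orthogonal_mx T /\ \det T = 1.

Definition act_poly n d e (T : 'M[R]_(e, d)) (P : polygon n d) : polygon n e :=
  fun k => T *m P k.

Definition poly_orbit n d (G : 'M[R]_d -> Prop) (P : polygon n d) : polygon n d -> Prop :=
  fun Q => exists2 T, G T & Q = act_poly T P.

Definition lin_isometry d e (f : 'M[R]_(e, d)) : Prop :=
  forall v : 'cV[R]_d, enorm (f *m v) = enorm v.

End Defs.

From mathcomp Require Import all_boot all_order all_algebra.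
From mathcomp Require Import reals.
From mathcomp Require Import ring.
Import Order.TTheory GRing.Theory Num.Theory.
Local Open Scope ring_scope.
Set Implicit Arguments. Unset Strict Implicit. Unset Printing Implicit Defensive.

(* An isometry f : R^d -> R^(d+1) has a unit normal u, and [u | f] is an
   orthogonal frame.  If S in SO(d+1) maps f(P) to f(Q), compose S with the
   reflection exchanging S u and u: the vectors f(Q) = S f(P) are orthogonal to
   both, so the composite still maps f(P) to f(Q), and it fixes u; hence it
   preserves the range of f and compresses to some T in O(d) with T P = Q.
   Conversely, T in O(d) extends to diag(det T, T) in the frame [u | f], an
   element of SO(d+1). *)

Section Euclidean.
Variable R : realType.

Definition dot m (x y : 'cV[R]_m) : R := (x^T *m y) 0 0.

Lemma dotE m (x y : 'cV[R]_m) : x^T *m y = (dot x y)%:M.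
Proof. exact: mx11_scalar. Qed.

Lemma dotC m (x y : 'cV[R]_m) : dot x y = dot y x.
Proof. by rewrite /dot !mxE; apply: eq_bigr => i _; rewrite !mxE mulrC. Qed.

Lemma dotDl m (x y z : 'cV[R]_m) : dot (x + y) z = dot x z + dot y z.
Proof. by rewrite /dot linearD mulmxDl mxE. Qed.

Lemma dotDr m (x y z : 'cV[R]_m) : dot x (y + z) = dot x y + dot x z.
Proof. by rewrite /dot mulmxDr mxE. Qed.

Lemma dotBl m (x y z : 'cV[R]_m) : dot (x - y) z = dot x z - dot y z.
Proof. by rewrite /dot linearB mulmxBl !mxE. Qed.

Lemma dotBr m (x y z : 'cV[R]_m) : dot x (y - z) = dot x y - dot x z.
Proof. by rewrite /dot mulmxBr !mxE. Qed.

Lemma dot_trmx m k (A : 'M[R]_(m, k)) x y : dot y (A *m x) = dot (A^T *m y) x.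
Proof. by rewrite /dot trmx_mul trmxK mulmxA. Qed.

Lemma dot_sumsq m (v : 'cV[R]_m) : dot v v = \sum_(j < m) v j 0 ^+ 2.
Proof. by rewrite /dot mxE; apply: eq_bigr => j _; rewrite !mxE expr2. Qed.

Lemma dotvv_ge0 m (v : 'cV[R]_m) : 0 <= dot v v.
Proof. by rewrite dot_sumsq; apply: sumr_ge0 => j _; apply: sqr_ge0. Qed.

Lemma dotvv_eq0 m (v : 'cV[R]_m) : (dot v v == 0) = (v == 0).
Proof.
apply/idP/idP => [|/eqP->]; last by rewrite /dot mulmx0 mxE.
rewrite dot_sumsq psumr_eq0 => [/allP v0|j _]; last exact: sqr_ge0.
apply/eqP/matrixP => i j; rewrite ord1 mxE.
by apply/eqP; rewrite -sqrf_eq0; apply: (implyP (v0 i (mem_index_enum i))).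
Qed.

Lemma dotvv_gt0 m (v : 'cV[R]_m) : (0 < dot v v) = (v != 0).
Proof. by rewrite lt_def dotvv_eq0 dotvv_ge0 andbT. Qed.

Lemma enormE m (v : 'cV[R]_m) : enorm v = Num.sqrt (dot v v).
Proof. by rewrite /enorm dot_sumsq. Qed.

Lemma dot_isometry m k (A : 'M[R]_(k, m)) (x y : 'cV[R]_m) :
  A^T *m A = 1%:M -> dot (A *m x) (A *m y) = dot x y.
Proof. by move=> AA; rewrite dot_trmx mulmxA AA mul1mx. Qed.

Lemma enorm_isometry m k (A : 'M[R]_(k, m)) (v : 'cV[R]_m) :
  A^T *m A = 1%:M -> enorm (A *m v) = enorm v.
Proof. by move=> AA; rewrite !enormE dot_isometry. Qed.

Lemma sym_mx_form_eq0 m (N : 'M[R]_m) :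
  N^T = N -> (forall x, dot x (N *m x) = 0) -> N = 0.
Proof.
move=> Nsym N0.
have Nxy x y : dot x (N *m y) = 0.
  have := N0 (x + y); rewrite mulmxDr !dotDl !dotDr !N0 add0r addr0.
  rewrite [dot y _]dot_trmx Nsym [dot (N *m y) x]dotC -mulr2n => /eqP.
  by rewrite mulrn_eq0 => /eqP.
have Ny (y : 'cV_m) : N *m y = 0 by apply/eqP; rewrite -dotvv_eq0 Nxy.
apply/matrixP => i j; have := congr1 (fun v : 'cV_m => v i 0) (Ny (delta_mx j 0)).
by rewrite -colE !mxE.
Qed.

Lemma lin_isometry_trmx_mul d e (f : 'M[R]_(e, d)) :
  lin_isometry f -> f^T *m f = 1%:M.
Proof.
move=> fiso; apply/eqP; rewrite -subr_eq0; apply/eqP/sym_mx_form_eq0.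
  by rewrite linearB /= trmx_mul trmxK trmx1.
move=> x; rewrite mulmxBl mul1mx dotBr -mulmxA dot_trmx trmxK.
have := fiso x; rewrite !enormE => /eqP; rewrite eqr_sqrt ?dotvv_ge0 // => /eqP->.
by rewrite subrr.
Qed.

Lemma orthogonal_mx_trC m (T : 'M[R]_m) : orthogonal_mx T -> T^T *m T = 1%:M.
Proof. exact: mulmx1C. Qed.

Lemma orthogonal_mxM m (S T : 'M[R]_m) :
  orthogonal_mx S -> orthogonal_mx T -> orthogonal_mx (S *m T).
Proof.
rewrite /orthogonal_mx => SS TT.
by rewrite trmx_mul mulmxA -(mulmxA S) TT mulmx1 SS.
Qed.

(* For [w = 0] this is the identity, since [2 / 0 = 0]. *)
Definition reflection m (w : 'cV[R]_m) : 'M[R]_m :=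
  1%:M - (2 / dot w w) *: (w *m w^T).

Lemma reflection_mul m (w x : 'cV[R]_m) :
  reflection w *m x = x - (2 / dot w w * dot w x) *: w.
Proof. by rewrite mulmxBl mul1mx -scalemxAl -mulmxA dotE mul_mx_scalar scalerA. Qed.

Lemma reflection_fix m (w x : 'cV[R]_m) : dot w x = 0 -> reflection w *m x = x.
Proof. by move=> wx; rewrite reflection_mul wx mulr0 scale0r subr0. Qed.

Lemma reflection_orthogonal m (w : 'cV[R]_m) : orthogonal_mx (reflection w).
Proof.
rewrite /orthogonal_mx /reflection; set c := dot w w; set k := 2 / c; set W := w *m w^T.
have Wsym : W^T = W by rewrite trmx_mul trmxK.
have WW : W *m W = c *: W.
  by rewrite /W mulmxA -(mulmxA w _ w) dotE mul_mx_scalar -scalemxAl.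
have kkc : k * k * c = k + k.
  have [c0|c0] := eqVneq c 0; rewrite /k; first by rewrite c0 invr0 !mulr0 addr0.
  by field.
have -> : (1%:M - k *: W)^T = 1%:M - k *: W.
  by rewrite raddfB /= linearZ /= trmx1 Wsym.
rewrite mulmxBl mul1mx mulmxBr mulmx1.
by rewrite -scalemxAl -scalemxAr WW !scalerA kkc scalerDl opprB addrK subrK.
Qed.

Lemma reflection_swap m (a b : 'cV[R]_m) :
  dot a a = dot b b -> reflection (a - b) *m a = b.
Proof.
move=> ab; set w : 'cV_m := a - b.
have [w0|wn0] := eqVneq w 0.
  rewrite reflection_fix; last by rewrite w0 /dot trmx0 mul0mx mxE.
  by apply/eqP; rewrite -subr_eq0 -/w w0.
have ww : dot w w = 2 * dot w a.
  by rewrite /w !dotBl !dotBr ab (dotC a b); ring.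
have wa : 2 / dot w w * dot w a = 1.
  have wa0 : dot w a != 0.
    by apply: contraNneq wn0 => wa0; rewrite -dotvv_eq0 ww wa0 mulr0.
  by rewrite ww; field.
by rewrite reflection_mul wa scale1r /w opprB addrCA subrr addr0.
Qed.

Lemma exists_unit_normal m k (f : 'M[R]_(m, k)) :
  (k < m)%N -> exists u : 'cV[R]_m, u^T *m u = 1%:M /\ u^T *m f = 0.
Proof.
move=> km.
have : kermx f != 0.
  by rewrite -mxrank_eq0 mxrank_ker subn_eq0 -ltnNge (leq_ltn_trans (rank_leq_col f)).
case/rowV0Pn => r /sub_kermxP rf rn0; set v := r^T.
have vv_gt0 : 0 < dot v v by rewrite dotvv_gt0 trmx_eq0.
set s := Num.sqrt (dot v v).
have s_gt0 : 0 < s by rewrite sqrtr_gt0.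
exists (s^-1 *: v); split.
  rewrite [(_ *: v)^T]linearZ /= -scalemxAl -scalemxAr dotE !scale_scalar_mx.
  by rewrite -(sqr_sqrtr (ltW vv_gt0)) -/s; congr _%:M; field; rewrite gt_eqF.
by rewrite [(_ *: v)^T]linearZ /= -scalemxAl trmxK rf scaler0.
Qed.

Lemma vertex_act n d e (T : 'M[R]_(e, d)) (P : polygon R n d) i :
  vertex (act_poly T P) i = T *m vertex P i.
Proof.
rewrite /vertex /act_poly; case: insub => [k|]; last by rewrite mulmx0.
by case: eqP; rewrite ?mulmx0.
Qed.

Lemma polyspace_act n d e (T : 'M[R]_(e, d)) (l : 'I_n -> R) (P : polygon R n d) :
  T^T *m T = 1%:M -> polyspace l P -> polyspace l (act_poly T P).
Proof. by move=> TT lP i; rewrite !vertex_act -mulmxBr enorm_isometry. Qed.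

Section Frame.
Variables (d : nat) (f : 'M[R]_(d.+1, d)) (u : 'cV[R]_d.+1).
Hypotheses (ff : f^T *m f = 1%:M) (uu : u^T *m u = 1%:M) (uf : u^T *m f = 0).

Let fu : f^T *m u = 0.
Proof. by rewrite -[f^T *m u]trmxK trmx_mul trmxK uf trmx0. Qed.

Lemma frame_orthonormal : (row_mx u f)^T *m row_mx u f = 1%:M.
Proof. by rewrite tr_row_mx mul_col_row uu uf fu ff -scalar_mx_block. Qed.

Lemma frame_orthogonal : orthogonal_mx (row_mx u f).
Proof. exact/mulmx1C/frame_orthonormal. Qed.

Lemma mulmx_trmx_complement : f *m f^T = 1%:M - u *m u^T.
Proof.
have := frame_orthogonal; rewrite /orthogonal_mx (tr_row_mx u f) (mul_row_col u f) => <-.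
by rewrite addrC addKr.
Qed.

Lemma orthogonal_compress (S : 'M[R]_d.+1) :
  orthogonal_mx S -> S *m u = u -> orthogonal_mx (f^T *m S *m f).
Proof.
move=> SS Su; have fSu : f^T *m S *m u = 0 by rewrite -mulmxA Su fu.
rewrite /orthogonal_mx !trmx_mul trmxK !mulmxA -(mulmxA _ f) mulmx_trmx_complement.
by rewrite mulmxBr mulmx1 mulmxA fSu mul0mx subr0 -(mulmxA _ S) SS mulmx1 ff.
Qed.

Lemma orthogonal_descent (S : 'M[R]_d.+1) : orthogonal_mx S ->
  exists2 T : 'M[R]_d, orthogonal_mx T &
    forall x y : 'cV[R]_d, S *m (f *m x) = f *m y -> T *m x = y.
Proof.
move=> SS; have StS := orthogonal_mx_trC SS.
have uf0 (x : 'cV_d) : dot u (f *m x) = 0 by rewrite /dot mulmxA uf mul0mx mxE.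
pose H := reflection (S *m u - u).
have Hu : H *m (S *m u) = u by apply: reflection_swap; rewrite dot_isometry.
exists (f^T *m (H *m S) *m f).
  apply: orthogonal_compress; last by rewrite -mulmxA.
  exact: orthogonal_mxM (reflection_orthogonal _) SS.
move=> x y Sfxy.
have Hfy : H *m (f *m y) = f *m y.
  by apply: reflection_fix; rewrite dotBl -Sfxy dot_isometry // Sfxy !uf0 subrr.
by rewrite -!mulmxA Sfxy Hfy mulmxA ff mul1mx.
Qed.

Lemma special_orthogonal_lift (T : 'M[R]_d) : orthogonal_mx T ->
  exists2 S : 'M[R]_d.+1, special_orthogonal_mx S & S *m f = f *m T.
Proof.
move=> TT; pose U : 'M[R]_d.+1 := row_mx u f.
have dT2 : \det T * \det T = 1 by rewrite -{2}det_tr -det_mulmx TT det1.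
(* In the frame [U], [S] acts as [T] on the range of [f] and as [det T = +-1] on [u]. *)
pose D : 'M[R]_(1 + d) := block_mx (\det T)%:M 0 0 T.
have DD : orthogonal_mx D.
  rewrite /orthogonal_mx tr_block_mx mulmx_block !trmx0 !mulmx0 !mul0mx.
  by rewrite !addr0 !add0r TT tr_scalar_mx -scalar_mxM dT2 -scalar_mx_block.
exists (U *m D *m U^T); first split.
- apply: orthogonal_mxM; first exact: orthogonal_mxM frame_orthogonal DD.
  by rewrite /orthogonal_mx trmxK frame_orthonormal.
- rewrite !det_mulmx mulrAC -det_mulmx frame_orthogonal det1 mul1r.
  by rewrite /D (det_ublock ((\det T)%:M : 'M_1) 0 T) det_scalar1 dT2.
- rewrite -mulmxA (tr_row_mx u f) mul_col_mx uf ff -mulmxA.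
  rewrite /D (mul_block_col ((\det T)%:M : 'M_1) 0 0 T (0 : 'M_(1, d)) 1%:M).
  rewrite !mulmx0 !mul0mx mulmx1 addr0 add0r.
  by rewrite (mul_row_col u f) mulmx0 add0r.
Qed.

End Frame.

End Euclidean.

Theorem proposition4p4 (R : realType) (n d : nat) (hn : (3 <= n)%N) (hd : (2 <= d)%N)
  (l : 'I_n -> R) (hl : forall i, 0 < l i)
  (f : 'M[R]_(d.+1, d)) (hf : lin_isometry f)
  (P : polygon R n d) (hP : polyspace l P) :
  forall Q : polygon R n d,
    (polyspace l Q /\
     poly_orbit (@special_orthogonal_mx R d.+1) (act_poly f P) (act_poly f Q))
    <-> poly_orbit (@orthogonal_mx R d) P Q.
Proof.
move=> Q; have ff := lin_isometry_trmx_mul hf.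
have [u [uu uf]] := exists_unit_normal f (ltnSn d).
split.
- case=> _ [S [SS _] fQ].
  have [T TT TPQ] := orthogonal_descent ff uu uf SS.
  exists T => //; apply: boolp.funext => k; apply/esym/TPQ.
  exact: esym (congr1 (fun g : polygon R n d.+1 => g k) fQ).
- case=> T TT ->; split; first exact: polyspace_act (orthogonal_mx_trC TT) hP.
  have [S SO Sf] := special_orthogonal_lift ff uu uf TT.
  by exists S => //; apply: boolp.funext => k; rewrite /act_poly !mulmxA Sf.
Qed.
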